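(* Let $(X_{1,\infty},f_{1,\infty})$ be a topological nonautonomous dynamical system such that the sequence $f_{1,\infty}$ is equicontinuous. Then $h_{\mathrm{top}}(f^{[k]}_{1,\infty})=k\cdot h_{\mathrm{top}}(f_{1,\infty})$ for all $k\ge1$.
   Context: Topological NDS: compact metric spaces $(X_n,\varrho_n)$, continuous $f_n:X_n\to X_{n+1}$; $f_k^n=f_{k+n-1}\circ\cdots\circ f_k$, $f_k^0=\mathrm{id}$. Equicontinuity: for every $\varepsilon>0$ there is $\delta>0$ with $\varrho_{n+1}(f_nx,f_ny)<\varepsilon$ whenever $\varrho_n(x,y)<\delta$, uniformly in $n$. Topological entropy: with $\varrho_{1,n}(x,y)=\max_{0\le i<n}\varrho_{1+i}(f_1^ix,f_1^iy)$, let $r_{\mathrm{sep}}(n,\varepsilon)$ be the maximal cardinality of a subset of $X_1$ whose distinct points have $\varrho_{1,n}$-distance $>\varepsilon$; $h_{\mathrm{top}}(f_{1,\infty})=\lim_{\varepsilon\searrow0}\limsup_n\frac1n\log r_{\mathrm{sep}}(n,\varepsilon)$. The $k$-th power system is $X^{[k]}_{1,\infty}=\{X_{(n-1)k+1}\}_{n\ge1}$ with maps $f^{[k]}_{1,\infty}=\{f^k_{(n-1)k+1}\}_{n\ge1}$. *)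

From HB Require Import structures.
From mathcomp Require Import all_boot all_order all_algebra.
From mathcomp Require Import all_classical all_reals all_analysis.
Set Implicit Arguments. Unset Strict Implicit. Unset Printing Implicit Defensive.
Import Order.TTheory GRing.Theory Num.Theory.
Import numFieldNormedType.Exports.
Local Open Scope classical_set_scope.
Local Open Scope ring_scope.

Section NDS.
Variable R : realType.

Definition is_metric (T : Type) (d : T -> T -> R) : Prop :=
  [/\ forall x y, d x y = 0 <-> x = y,
      forall x y, d x y = d y x &
      forall x y z, d x z <= d x y + d y z].

Definition mopen (T : Type) (d : T -> T -> R) (U : set T) : Prop :=
  forall x, U x -> exists2 r : R, 0 < r & forall y, d x y < r -> U y.

Definition mcompact (T : Type) (d : T -> T -> R) : Prop :=
  forall (I : Type) (U : I -> set T),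
    (forall i, mopen d (U i)) -> (forall x, exists i, U i x) ->
    exists (m : nat) (s : 'I_m -> I), forall x, exists j, U (s j) x.

Definition mcontinuous (S T : Type) (dS : S -> S -> R) (dT : T -> T -> R)
  (g : S -> T) : Prop :=
  forall x (e : R), 0 < e -> exists2 delta : R, 0 < delta &
    forall y, dS x y < delta -> dT (g x) (g y) < e.

(** A topological NDS indexed from 0: spaces X n with metrics d n, maps
    f n : X n -> X n.+1. *)
Definition is_TNDS (X : nat -> Type) (d : forall n, X n -> X n -> R)
  (f : forall n, X n -> X n.+1) : Prop :=
  [/\ forall n, is_metric (d n), forall n, mcompact (d n) &
      forall n, mcontinuous (d n) (d n.+1) (f n)].

Definition nds_equicontinuous (X : nat -> Type) (d : forall n, X n -> X n -> R)
  (f : forall n, X n -> X n.+1) : Prop :=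
  forall e : R, 0 < e -> exists2 delta : R, 0 < delta &
    forall n (x y : X n), d n x y < delta -> d n.+1 (f n x) (f n y) < e.

Fixpoint iterf (X : nat -> Type) (f : forall n, X n -> X n.+1) (k n : nat)
  : X k -> X (n + k) :=
  match n return X k -> X (n + k) with
  | 0 => fun x => x
  | m.+1 => fun x => f (m + k)%N (@iterf X f k m x)
  end.
Arguments iterf {X} f k n.

Definition bowen (X : nat -> Type) (d : forall n, X n -> X n -> R)
  (f : forall n, X n -> X n.+1) (n : nat) (x y : X 0) : R :=
  \big[Order.max/0]_(i < n) d (i + 0)%N (iterf f 0 i x) (iterf f 0 i y).

Definition rsep (X : nat -> Type) (d : forall n, X n -> X n -> R)
  (f : forall n, X n -> X n.+1) (n : nat) (eps : R) : \bar R :=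
  ereal_sup [set (m%:R)%:E | m in
    [set m : nat | exists p : 'I_m -> X 0,
        forall i j, i != j -> eps < bowen d f n (p i) (p j)]].

Definition eln (x : \bar R) : \bar R :=
  match x with
  | r%:E => (ln r)%:E
  | +oo%E => +oo%E
  | -oo%E => -oo%E
  end.

Definition nds_htop (X : nat -> Type) (d : forall n, X n -> X n -> R)
  (f : forall n, X n -> X n.+1) : \bar R :=
  lim ((fun eps : R =>
          limn_esup (fun n : nat => (eln (rsep d f n eps) * (n%:R^-1)%:E)%E))
       @ 0^'+).

Definition powX (X : nat -> Type) (k : nat) : nat -> Type := fun n => X (n * k)%N.

Definition powd (X : nat -> Type) (d : forall n, X n -> X n -> R) (k : nat)
  : forall n, powX X k n -> powX X k n -> R := fun n => d (n * k)%N.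

Definition powf (X : nat -> Type) (f : forall n, X n -> X n.+1) (k : nat)
  : forall n, powX X k n -> powX X k n.+1 := fun n => iterf f (n * k)%N k.

End NDS.
Arguments powd {R X} d k n.
Arguments powf {X} f k n.

(* An (n, e)-separated set of the k-th power system is (nk, e)-separated for
   the original system, since the Bowen metric of the power system at time n
   only looks at the times 0, k, ..., (n-1)k; hence r_sep grows at most k times
   faster along the power system.  Conversely, equicontinuity makes the first k
   iterates uniformly equicontinuous, so closeness at the times 0, k, 2k, ...
   forces closeness at all intermediate times: an (nk, e)-separated set is
   (n, delta)-separated for the power system.  Rescaling the exponential growth
   rates by k and letting e go to 0 gives the equality. *)
From HB Require Import structures.
From mathcomp Require Import all_boot all_order all_algebra.
From mathcomp Require Import all_classical all_reals all_analysis.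
From mathcomp Require Import ring lra.
Import Order.TTheory GRing.Theory Num.Theory.
Local Open Scope ring_scope.

Section ExtendedLog.
Context {R : realType}.
Local Open Scope ereal_scope.

(* Separation numbers are cardinals, hence lie in {0} u [1, +oo]; since the
   library sets [ln 0 = 0], this is where [eln] is monotone and nonnegative. *)
Definition zero_or_ge1 (x : \bar R) := x = 0 \/ 1 <= x.

Lemma eln_ge0 x : zero_or_ge1 x -> 0 <= eln x.
Proof.
case=> [->|]; first by rewrite /= ln0.
by case: x => [r| |] //=; rewrite !lee_fin => /ln_ge0.
Qed.

Lemma le_eln x y : zero_or_ge1 x -> zero_or_ge1 y -> x <= y -> eln x <= eln y.
Proof.
move=> zx zy; case: zx => [->|]; first by rewrite /= ln0 // => _; exact: eln_ge0.
case: x => [r| |] //=; case: y zy => [s| |] //=; last by move=> *; rewrite leey.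
move=> _; rewrite !lee_fin => r1 rs.
have r0 : (0 < r)%R by apply: lt_le_trans r1.
by rewrite ler_ln // posrE; apply: lt_le_trans rs.
Qed.

End ExtendedLog.

Lemma congr2_Tagged {I : eqType} {T_ : I -> Type} {U : Type}
    (F : forall i, T_ i -> T_ i -> U) i j (a b : T_ i) (a' b' : T_ j) :
  Tagged T_ a = Tagged T_ a' -> Tagged T_ b = Tagged T_ b' -> F i a b = F j a' b'.
Proof.
move=> eaa'; have ij : i = j := congr1 tag eaa'.
subst j; by move: eaa' => /(@eq_from_Tagged I T_ i) -> /(@eq_from_Tagged I T_ i) ->.
Qed.

Section Iterates.
Context {X : nat -> Type} (f : forall n, X n -> X n.+1).

Lemma Tagged_iterf k {p q} {u : X p} {v : X q} :
  Tagged X u = Tagged X v -> Tagged X (iterf f k u) = Tagged X (iterf f k v).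
Proof.
pose F (s : {n & X n}) := Tagged X (iterf f k (tagged s)).
by move=> uv; change (F (Tagged X u) = F (Tagged X v)); rewrite uv.
Qed.

Lemma iterfD {a} n m (x : X a) :
  Tagged X (iterf f (n + m)%N x) = Tagged X (iterf f n (iterf f m x)).
Proof. by elim: n => [|n IH] //=; exact: (Tagged_iterf 1 IH). Qed.

Lemma iterf_powf k i (x : X 0%N) :
  Tagged X (iterf (powf f k) (k:=0%N) i x) = Tagged X (iterf f (i * k) x).
Proof.
elim: i => [|i IH] //=; rewrite /powf.
by rewrite (Tagged_iterf k IH) -(iterfD k (i * k) x).
Qed.

End Iterates.

Section Separation.
Context {R : realType} {X : nat -> Type}.
Variables (d : forall n, X n -> X n -> R) (f : forall n, X n -> X n.+1).

Definition orbit_dist (i : nat) (x y : X 0) : R :=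
  d (i + 0)%N (iterf f i x) (iterf f i y).

Lemma bowen_ge0 n x y : 0 <= bowen d f n x y.
Proof. exact: bigmax_ge_id. Qed.

Lemma orbit_dist_le_bowen n i x y : (i < n)%N -> orbit_dist i x y <= bowen d f n x y.
Proof.
by move=> lt_in; exact: (le_bigmax _ (fun j : 'I_n => orbit_dist j x y) (Ordinal lt_in)).
Qed.

Lemma bowen_le n x y e : 0 <= e -> (forall i, (i < n)%N -> orbit_dist i x y <= e) ->
  bowen d f n x y <= e.
Proof. by move=> e0 le_e; apply: bigmax_le => // i _; exact: le_e. Qed.

Lemma le_bowen m n x y : (m <= n)%N -> bowen d f m x y <= bowen d f n x y.
Proof.
move=> le_mn; apply: bowen_le => [|i lt_im]; first exact: bowen_ge0.
by apply: orbit_dist_le_bowen; exact: leq_trans le_mn.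
Qed.

Local Open Scope ereal_scope.

Lemma rsep_zero_or_ge1 n e : zero_or_ge1 (rsep d f n e).
Proof.
have [[m [m0 sep_m]]|] := pselect (exists m, (0 < m)%N /\ exists p : 'I_m -> X 0,
    forall i j, i != j -> (e < bowen d f n (p i) (p j))%R).
  right; apply: le_trans (_ : m%:R%:E <= _); first by rewrite lee_fin ler1n.
  by apply: ereal_sup_ubound; exists m.
move=> no_sep; left; apply/eqP; rewrite eq_le; apply/andP; split.
  apply: ge_ereal_sup => _ [[|m] sep_m <-] //.
  by case: no_sep; exists m.+1.
apply: ereal_sup_ubound; exists 0%N => //.
by exists (fun i : 'I_0 => match i with Ordinal _ h => False_rect _ (notF h) end) => [[]].
Qed.

End Separation.

Lemma le_rsep {R : realType} {X1 X2 : nat -> Type}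
    {d1 : forall n, X1 n -> X1 n -> R} {f1 : forall n, X1 n -> X1 n.+1}
    {d2 : forall n, X2 n -> X2 n -> R} {f2 : forall n, X2 n -> X2 n.+1}
    (g : X1 0 -> X2 0) n1 n2 e1 e2 :
  (forall x y, e1 < bowen d1 f1 n1 x y -> e2 < bowen d2 f2 n2 (g x) (g y)) ->
  (rsep d1 f1 n1 e1 <= rsep d2 f2 n2 e2)%E.
Proof.
move=> sep_g; apply: ereal_sup_le => _ [m [p sep_p] <-].
by exists m => //=; exists (g \o p) => i j ij; exact/sep_g/sep_p.
Qed.

Section RsepMonotone.
Context {R : realType} {X : nat -> Type}.
Variables (d : forall n, X n -> X n -> R) (f : forall n, X n -> X n.+1).
Local Open Scope ereal_scope.

Lemma le_rsep_time m n e : (m <= n)%N -> rsep d f m e <= rsep d f n e.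
Proof.
move=> le_mn; apply: (le_rsep id) => x y /lt_le_trans; apply.
exact: le_bowen.
Qed.

Lemma le_rsep_eps n (e1 e2 : R) : (e1 <= e2)%R -> rsep d f n e2 <= rsep d f n e1.
Proof. by move=> le_e; apply: (le_rsep id) => x y; exact: le_lt_trans. Qed.

End RsepMonotone.

Section EquicontinuousIterates.
Context {R : realType} {X : nat -> Type}.
Context {d : forall n, X n -> X n -> R} {f : forall n, X n -> X n.+1}.
Hypothesis equicont : nds_equicontinuous d f.

Lemma equicontinuous_iterf K (e : R) : 0 < e -> exists2 delta : R, 0 < delta &
  forall r, (r <= K)%N -> forall a (u v : X a), d _ u v <= delta ->
    d _ (iterf f r u) (iterf f r v) <= e.
Proof.
elim: K e => [|K IH] e e0.
  by exists e => // r; rewrite leqn0 => /eqP -> a u v.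
have [eta eta0 f_eta] := equicont _ e0.
have [|delta delta0 iter_delta] := IH (Order.min e (eta / 2)).
  by rewrite lt_min e0 divr_gt0.
exists delta => // r; rewrite leq_eqVlt ltnS => /orP[/eqP -> | le_rK] a u v uv.
  apply/ltW/f_eta; apply: le_lt_trans (iter_delta K (leqnn K) _ _ _ uv) _.
  by rewrite gt_min ltr_pdivrMr // ltr_pMr // ltr1n orbT.
by apply: le_trans (iter_delta r le_rK _ _ _ uv) _; rewrite ge_min lexx.
Qed.

End EquicontinuousIterates.

Section PowerSystem.
Context {R : realType} {X : nat -> Type}.
Variables (d : forall n, X n -> X n -> R) (f : forall n, X n -> X n.+1).
Context {k : nat}.
Hypothesis k_gt0 : (0 < k)%N.

Lemma orbit_dist_powf q x y :
  orbit_dist (powd d k) (powf f k) q x y = orbit_dist d f (q * k) x y.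
Proof. by apply: (congr2_Tagged d); exact: iterf_powf. Qed.

Lemma bowen_powf_le n x y : bowen (powd d k) (powf f k) n x y <= bowen d f (n * k) x y.
Proof.
apply: bowen_le => [|q lt_qn]; first exact: bowen_ge0.
by rewrite orbit_dist_powf; apply: orbit_dist_le_bowen; rewrite ltn_pmul2r.
Qed.

Lemma rsep_powf_le n e : (rsep (powd d k) (powf f k) n e <= rsep d f (n * k) e)%E.
Proof.
apply: (le_rsep (id : powX X k 0 -> X 0)) => x y /lt_le_trans; apply.
exact: bowen_powf_le.
Qed.

Context {e delta : R}.
Hypothesis e_ge0 : 0 <= e.
Hypothesis iter_delta : forall r, (r <= k)%N -> forall a (u v : X a), d _ u v <= delta ->
  d _ (iterf f r u) (iterf f r v) <= e.

Lemma bowen_le_powf n x y :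
  bowen (powd d k) (powf f k) n x y <= delta -> bowen d f (n * k) x y <= e.
Proof.
move=> close_powf; apply: bowen_le => // i lt_i.
rewrite (divn_eq i k) addnC; set r := (i %% k)%N; set q := (i %/ k)%N.
have close_q : orbit_dist d f (q * k) x y <= delta.
  rewrite -orbit_dist_powf; apply: le_trans close_powf.
  by apply: orbit_dist_le_bowen; rewrite ltn_divLR.
have := iter_delta _ (ltnW (ltn_pmod i k_gt0)) _ _ _ close_q.
by congr (_ <= _); apply: (congr2_Tagged d); rewrite -iterfD.
Qed.

Lemma rsep_le_powf n : (rsep d f (n * k) e <= rsep (powd d k) (powf f k) n delta)%E.
Proof.
apply: (le_rsep (id : X 0 -> powX X k 0)) => x y; rewrite !ltNge; apply: contra.
exact: bowen_le_powf.
Qed.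

End PowerSystem.

Lemma ceil_ratio_bound {R : realType} (s eps K m n : R) :
  1 <= K -> 0 < m -> 0 <= s -> 0 < eps -> n * K <= m + K -> 2 * s + eps <= m * eps ->
  (s + eps / 2) * n / m <= s / K + eps.
Proof.
move=> K1 m0 s0 eps0 le_nK le_m; have K0 : 0 < K by lra.
rewrite ler_pdivrMr // -(ler_pM2r K0).
have -> : (s / K + eps) * m * K = s * m + eps * m * K by field; lra.
have c0 : 0 <= s + eps / 2 by lra.
have := ler_wpM2l c0 le_nK; have := ler_wpM2r (ltW K0) le_m.
have := ler_wpM2l (ltW eps0) (ler_wpM2l (ltW m0) K1).
nra.
Qed.

Section UpperLimits.
Context {R : realType}.
Local Open Scope classical_set_scope.
Local Open Scope ereal_scope.
Implicit Types u v : nat -> \bar R.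

Lemma limn_esup_lt_eventually u y :
  limn_esup u < y -> exists N, forall n, (N <= n)%N -> u n < y.
Proof.
rewrite /limn_esup limf_esupE => /ereal_inf_lt [_ [V [N _ sub_V] <-] sup_lt].
exists N => n le_Nn; apply: le_lt_trans sup_lt.
by apply: ereal_sup_ubound; exists n => //; exact: sub_V.
Qed.

Lemma limn_esup_le_eventually u z :
  (exists N, forall n, (N <= n)%N -> u n <= z) -> limn_esup u <= z.
Proof.
case=> N le_z; rewrite /limn_esup limf_esupE.
apply: le_trans (_ : ereal_sup (u @` [set n : nat | (N <= n)%N]) <= _).
  by apply: ereal_inf_lbound; exists [set n : nat | (N <= n)%N] => //; exists N.
by apply: ge_ereal_sup => _ [n le_Nn <-]; exact: le_z.
Qed.

Lemma le_limn_esup u v : (forall n, u n <= v n) -> limn_esup u <= limn_esup v.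
Proof.
move=> le_uv; rewrite /limn_esup !limf_esupE.
apply: le_ereal_inf_tmp => _ [V FV <-].
apply: le_trans (_ : ereal_sup (u @` V) <= _); first by apply: ereal_inf_lbound; exists V.
apply: ge_ereal_sup => _ [n Vn <-]; apply: le_trans (le_uv n) _.
by apply: ereal_sup_ubound; exists n.
Qed.

Lemma limn_esup_ge0 {u} : (forall n, 0 <= u n) -> 0 <= limn_esup u.
Proof. by move=> u_ge0; apply: limf_esup_ge0 => //; exact: eventually_proper. Qed.

Definition rate u (n : nat) : \bar R := u n * (n%:R^-1)%:E.

Lemma rate_ge0 {u} : (forall n, 0 <= u n) -> forall n, 0 <= rate u n.
Proof. by move=> u_ge0 n; apply: mule_ge0 => //; rewrite lee_fin invr_ge0. Qed.

Lemma le_rate {u v n} : u n <= v n -> rate u n <= rate v n.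
Proof. by move=> le_uv; apply: lee_wpmul2r => //; rewrite lee_fin invr_ge0. Qed.

Variable k : nat.
Hypothesis k_gt0 : (0 < k)%N.

Lemma limn_esup_rate_le_mul u v : (forall n, 0 <= u n) ->
  (forall n, v n <= u (n * k)%N) -> limn_esup (rate v) <= k%:R%:E * limn_esup (rate u).
Proof.
move=> u_ge0 le_vu; have k0 : (0 < k%:R :> R)%R by rewrite ltr0n.
have := limn_esup_ge0 (rate_ge0 u_ge0).
case lim_u : (limn_esup (rate u)) => [r| |] // r0; last by rewrite gt0_muley ?leey.
apply/lee_addgt0Pr => eps eps0.
have [|N lt_N] := @limn_esup_lt_eventually (rate u) (r + eps / k%:R)%:E.
  by rewrite lim_u lte_fin ltrDl divr_gt0.
apply: limn_esup_le_eventually; exists N => n le_Nn.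
have rate_vu : rate v n <= k%:R%:E * rate u (n * k).
  apply: le_trans (le_rate (v := fun m => u (m * k)%N) (le_vu n)) _.
  rewrite /rate muleCA -EFinM natrM invfM mulrCA mulfV ?mulr1 //.
  by rewrite gt_eqF.
apply: le_trans rate_vu (le_trans (_ : _ <= k%:R%:E * (r + eps / k%:R)%:E) _).
  apply: lee_wpmul2l; first by rewrite lee_fin ltW.
  by apply/ltW/lt_N; apply: leq_trans le_Nn _; exact: leq_pmulr.
by rewrite -EFinM -EFinD mulrDr mulrCA mulfV ?mulr1 // gt_eqF.
Qed.

Lemma limn_esup_rate_mul_le u v : (forall n, 0 <= v n) ->
  (forall m, u m <= v (m %/ k).+1) -> k%:R%:E * limn_esup (rate u) <= limn_esup (rate v).
Proof.
move=> v_ge0 le_uv; have k0 : (0 < k%:R :> R)%R by rewrite ltr0n.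
have := limn_esup_ge0 (rate_ge0 v_ge0).
case lim_v : (limn_esup (rate v)) => [s| |] // s0; last by rewrite leey.
rewrite lee_fin in s0.
suff lim_u : limn_esup (rate u) <= (s / k%:R)%:E.
  apply: le_trans (lee_wpmul2l _ lim_u) _; first by rewrite lee_fin ltW.
  by rewrite -EFinM mulrCA mulfV ?mulr1 // gt_eqF.
apply/lee_addgt0Pr => eps eps0.
have [|N lt_N] := @limn_esup_lt_eventually (rate v) (s + eps / 2)%:E.
  by rewrite lim_v lte_fin ltrDl divr_gt0.
apply: limn_esup_le_eventually.
exists (maxn (N * k) (Num.truncn ((2 * s + eps) / eps)).+1) => m.
rewrite geq_max => /andP[le_Nk_m lt_trunc_m]; set n := (m %/ k).+1.
have m0 : (0 < m%:R :> R)%R by rewrite ltr0n; apply: leq_trans lt_trunc_m.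
have rate_u : rate u m <= rate v n * (n%:R / m%:R)%:E.
  rewrite /rate -muleA -EFinM mulrA mulVf ?mul1r ?pnatr_eq0 //.
  exact: lee_wpmul2r.
apply: (le_trans rate_u); apply: le_trans (_ : (s + eps / 2)%:E * (n%:R / m%:R)%:E <= _).
  apply: lee_wpmul2r; first by rewrite lee_fin divr_ge0.
  by apply/ltW/lt_N/leqW; rewrite leq_divRL.
rewrite -EFinM lee_fin mulrA; apply: ceil_ratio_bound => //; first by rewrite ler1n.
  by rewrite -natrM -natrD ler_nat /n mulSnr leq_add2r leq_divM.
rewrite -ler_pdivrMr //; apply/ltW/(lt_le_trans (truncnS_gt _)).
by rewrite ler_nat.
Qed.

End UpperLimits.

Section Entropy.
Context {R : realType} {X : nat -> Type}.
Variables (d : forall n, X n -> X n -> R) (f : forall n, X n -> X n.+1).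
Local Open Scope classical_set_scope.
Local Open Scope ereal_scope.

Definition sep_growth (e : R) : \bar R := limn_esup (rate (fun n => eln (rsep d f n e))).

Lemma eln_rsep_ge0 n e : 0 <= eln (rsep d f n e).
Proof. exact/eln_ge0/rsep_zero_or_ge1. Qed.

Lemma le_sep_growth (e1 e2 : R) : (e1 <= e2)%R -> sep_growth e2 <= sep_growth e1.
Proof.
move=> le_e; apply: le_limn_esup => n; apply: le_rate.
by apply: le_eln; [exact: rsep_zero_or_ge1.. | exact: le_rsep_eps].
Qed.

Lemma nds_htopE : nds_htop d f = ereal_sup (sep_growth @` [set` (`]0, +oo[)%R]).
Proof.
rewrite /nds_htop; apply: cvg_lim => //.
apply: (nonincreasing_at_right_cvge (BInfty R false)) => // x y _ _.
exact: le_sep_growth.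
Qed.

End Entropy.

Section PowerEntropy.
Context {R : realType} {X : nat -> Type}.
Variables (d : forall n, X n -> X n -> R) (f : forall n, X n -> X n.+1).
Context {k : nat}.
Hypothesis k_gt0 : (0 < k)%N.
Local Open Scope ereal_scope.

Lemma sep_growth_powf_le e :
  sep_growth (powd d k) (powf f k) e <= k%:R%:E * sep_growth d f e.
Proof.
apply: limn_esup_rate_le_mul => // n; first exact: eln_rsep_ge0.
by apply: le_eln; [exact: rsep_zero_or_ge1.. | exact: rsep_powf_le].
Qed.

Hypothesis equicont : nds_equicontinuous d f.

Lemma sep_growth_le_powf (e : R) : (0 < e)%R -> exists2 delta : R, (0 < delta)%R &
  k%:R%:E * sep_growth d f e <= sep_growth (powd d k) (powf f k) delta.
Proof.
move=> e0; have [delta delta0 iter_delta] := equicontinuous_iterf equicont k _ e0.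
exists delta => //; apply: limn_esup_rate_mul_le => // m; first exact: eln_rsep_ge0.
apply: le_eln; [exact: rsep_zero_or_ge1.. |].
apply: le_trans (rsep_le_powf d f k_gt0 (ltW e0) iter_delta _).
exact/le_rsep_time/ltnW/ltn_ceil.
Qed.

End PowerEntropy.

Theorem mainTheorem9 (R : realType) (X : nat -> Type)
  (d : forall n, X n -> X n -> R) (f : forall n, X n -> X n.+1) :
  is_TNDS d f -> nds_equicontinuous d f ->
  forall k : nat, (1 <= k)%N ->
    nds_htop (powd d k) (powf f k) = ((k%:R : R)%:E * nds_htop d f)%E.
Proof.
move=> _ equicont k k_gt0; rewrite !nds_htopE; apply/eqP; rewrite eq_le; apply/andP; split.
  apply: ge_ereal_sup => _ [e e_pos <-]; apply: le_trans (sep_growth_powf_le d f k_gt0 e) _.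
  apply: lee_wpmul2l; first by rewrite lee_fin.
  by apply: ereal_sup_ubound; exists e.
rewrite -ereal_supZl //; last first.
  by apply/set0P; exists (sep_growth d f 1), 1%R; rewrite //= in_itv /= ltr01.
apply: ge_ereal_sup => _ [_ [e e_pos <-] <-].
have [|delta delta_pos le_delta] := sep_growth_le_powf d f k_gt0 equicont e.
  by move: e_pos; rewrite /= in_itv andbT.
apply: le_trans le_delta _; apply: ereal_sup_ubound; exists delta => //.
by rewrite /= in_itv /= delta_pos.
Qed.
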